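(* Let $\alpha,\beta\in\mathbb{R}$ with $\alpha\neq 0$, and let $G_1$ be the connected, simply connected Lie group whose Lie algebra $\mathfrak{g}_1$ has a basis $\{e_1,e_2,e_3\}$ with $[e_1,e_2]=\alpha e_1-\beta e_3$, $[e_1,e_3]=-\alpha e_1-\beta e_2$, $[e_2,e_3]=\beta e_1+\alpha e_2+\alpha e_3$, equipped with the left-invariant Lorentzian metric $g$ for which $\{e_1,e_2,e_3\}$ is pseudo-orthonormal with $e_3$ timelike, and with the product structure $J$. Let $\lambda_0,c\in\mathbb{R}$. Then there exists a derivation $D$ of $\mathfrak{g}_1$ with $\widetilde{\mathrm{Ric}}^1=(s^1\lambda_0+c)\mathrm{Id}+D$ (i.e. $(G_1,g,J)$ is an algebraic Schouten soliton associated to the Kobayashi–Nomizu connection $\nabla^1$) if and only if $\beta=0$ and $c=-\frac12\alpha^2+2\alpha^2\lambda_0$.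
   Context: Pseudo-orthonormal means $g(e_1,e_1)=g(e_2,e_2)=1$, $g(e_3,e_3)=-1$, $g(e_i,e_j)=0$ for $i\neq j$; left-invariant tensors are identified with their values on $\mathfrak{g}$. $\nabla$ is the Levi-Civita connection of $g$. The product structure $J$ is the left-invariant endomorphism with $Je_1=e_1$, $Je_2=e_2$, $Je_3=-e_3$. The canonical connection is $\nabla^0_XY=\nabla_XY-\frac12(\nabla_XJ)JY$, and the Kobayashi–Nomizu connection is $\nabla^1_XY=\nabla^0_XY-\frac14[(\nabla_YJ)JX-(\nabla_{JY}J)X]$. For $k=0,1$: $R^k(X,Y)Z=\nabla^k_X\nabla^k_YZ-\nabla^k_Y\nabla^k_XZ-\nabla^k_{[X,Y]}Z$; $\rho^k(X,Y)=-g(R^k(X,e_1)Y,e_1)-g(R^k(X,e_2)Y,e_2)+g(R^k(X,e_3)Y,e_3)$; $\widetilde\rho^k(X,Y)=\frac12(\rho^k(X,Y)+\rho^k(Y,X))$; $\widetilde{\mathrm{Ric}}^k$ is defined by $\widetilde\rho^k(X,Y)=g(\widetilde{\mathrm{Ric}}^k(X),Y)$; and $s^k=\widetilde\rho^k(e_1,e_1)+\widetilde\rho^k(e_2,e_2)-\widetilde\rho^k(e_3,e_3)$. A derivation of $\mathfrak{g}$ is a linear map $D$ with $D[X,Y]=[DX,Y]+[X,DY]$. $(G,g,J)$ is an algebraic Schouten soliton associated to $\nabla^k$ (with real constants $\lambda_0,c$) if $\widetilde{\mathrm{Ric}}^k=(s^k\lambda_0+c)\mathrm{Id}+D$ for some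 derivation $D$. *)

(* Left-invariant objects on G_1 are identified with their
   values on the Lie algebra g_1 = R^3 (row vectors, coordinates in the basis
   e1,e2,e3). Endomorphisms act on row vectors by right multiplication. *)
From HB Require Import structures.
From mathcomp Require Import all_boot all_order all_algebra.
From mathcomp Require Import reals.
Set Implicit Arguments. Unset Strict Implicit. Unset Printing Implicit Defensive.
Import Order.TTheory GRing.Theory Num.Theory.
Local Open Scope ring_scope.

Section G1.
Variable R : realType.
Variables alpha beta : R.

Definition vec := 'rV[R]_3.
(* basis vectors e_{i+1} *)
Definition e (i : 'I_3) : vec := delta_mx 0 i.
Definition E1 : vec := e (inord 0).
Definition E2 : vec := e (inord 1).
Definition E3 : vec := e (inord 2).

Definition epsg (i : 'I_3) : R := if val i == 2%N then -1 else 1.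
Definition g (u v : vec) : R := \sum_(i < 3) epsg i * u 0 i * v 0 i.

Definition brb (i j : 'I_3) : vec :=
  match (val i, val j) with
  | (0%N, 1%N) => alpha *: E1 - beta *: E3
  | (1%N, 0%N) => - (alpha *: E1 - beta *: E3)
  | (0%N, 2%N) => - alpha *: E1 - beta *: E2
  | (2%N, 0%N) => - (- alpha *: E1 - beta *: E2)
  | (1%N, 2%N) => beta *: E1 + alpha *: E2 + alpha *: E3
  | (2%N, 1%N) => - (beta *: E1 + alpha *: E2 + alpha *: E3)
  | _ => (0 : vec)
  end.

Definition br (u v : vec) : vec :=
  \sum_(i < 3) \sum_(j < 3) (u 0 i * v 0 j) *: brb i j.

(* Levi-Civita connection on left-invariant fields (Koszul formula):
   2 g(nab X Y, Z) = g([X,Y],Z) - g([Y,Z],X) + g([Z,X],Y). *)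
Definition nab (X Y : vec) : vec :=
  \sum_(k < 3) (epsg k * ((g (br X Y) (e k) - g (br Y (e k)) X
                          + g (br (e k) X) Y) / 2)) *: e k.

Definition Jb (i : 'I_3) : vec := if val i == 2%N then - e i else e i.
Definition Jm (u : vec) : vec := \sum_(i < 3) u 0 i *: Jb i.

Definition nablaJ (X Y : vec) : vec := nab X (Jm Y) - Jm (nab X Y).

Definition nab0 (X Y : vec) : vec := nab X Y - (1/2) *: nablaJ X (Jm Y).
Definition nab1 (X Y : vec) : vec :=
  nab0 X Y - (1/4) *: (nablaJ Y (Jm X) - nablaJ (Jm Y) X).

Definition Curv (nb : vec -> vec -> vec) (X Y Z : vec) : vec :=
  nb X (nb Y Z) - nb Y (nb X Z) - nb (br X Y) Z.
Definition rho (nb : vec -> vec -> vec) (X Y : vec) : R :=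
  - g (Curv nb X E1 Y) E1 - g (Curv nb X E2 Y) E2 + g (Curv nb X E3 Y) E3.
Definition rhot (nb : vec -> vec -> vec) (X Y : vec) : R :=
  (rho nb X Y + rho nb Y X) / 2.
(* the endomorphism with rhot(X,Y) = g(Ric X, Y) *)
Definition Ric (nb : vec -> vec -> vec) (X : vec) : vec :=
  \sum_(k < 3) (epsg k * rhot nb X (e k)) *: e k.
Definition scal (nb : vec -> vec -> vec) : R :=
  rhot nb E1 E1 + rhot nb E2 E2 - rhot nb E3 E3.

Definition is_derivation (D : 'M[R]_3) : Prop :=
  forall u v : vec, br u v *m D = br (u *m D) v + br u (v *m D).

Definition alg_schouten_soliton (nb : vec -> vec -> vec) (lambda0 c : R) : Prop :=
  exists D : 'M[R]_3, is_derivation D /\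
    forall X : vec, Ric nb X = (scal nb * lambda0 + c) *: X + X *m D.

End G1.

(* The Kobayashi-Nomizu
   connection is bilinear with simple coefficients, and its symmetrized Ricci
   tensor is rho~^1(X, Y) = g(X M, Y) for an explicit matrix M, with
   s^1 = -2 (alpha^2 + beta^2).  Since g is nondegenerate this gives
   Ric~^1 X = X M, so the derivation in a soliton must be M - k Id with
   k = s^1 lambda0 + c.  The derivation identity on the pair (e1, e2) yields
   alpha^2 beta = 0 and alpha (k + alpha^2/2 + 2 beta^2) = 0, hence beta = 0 and
   k = -alpha^2/2; conversely, for these values M - k Id is a derivation. *)
From mathcomp Require Import all_boot all_order all_algebra.
From mathcomp Require Import reals ring lra.
Import GRing.Theory.
Set Implicit Arguments. Unset Strict Implicit. Unset Printing Implicit Defensive.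
Local Open Scope ring_scope.

Section Vec3.
Variable R : comPzRingType.

Definition vec3 (x y z : R) : 'rV[R]_3 := \row_(i < 3) [:: x; y; z]`_i.

Definition mx3 (r1 r2 r3 : 'rV[R]_3) : 'M[R]_3 := \matrix_(i < 3) [:: r1; r2; r3]`_i.

Lemma vec3_eta (u : 'rV[R]_3) :
  u = vec3 (u 0 (inord 0)) (u 0 (inord 1)) (u 0 (inord 2)).
Proof.
apply/rowP => -[[|[|[|//]]] i3]; rewrite !mxE /=; congr (u _ _);
  by apply: val_inj; rewrite /= inordK.
Qed.

Lemma vec3_inj (x y z x' y' z' : R) :
  vec3 x y z = vec3 x' y' z' -> [/\ x = x', y = y' & z = z'].
Proof.
move/rowP=> eq_xyz; split.
- by have := eq_xyz (inord 0); rewrite !mxE inordK.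
- by have := eq_xyz (inord 1); rewrite !mxE inordK.
- by have := eq_xyz (inord 2); rewrite !mxE inordK.
Qed.

Lemma vec3D (x y z x' y' z' : R) :
  vec3 x y z + vec3 x' y' z' = vec3 (x + x') (y + y') (z + z').
Proof. by apply/rowP => -[[|[|[|//]]] i3]; rewrite !mxE. Qed.

Lemma vec3N (x y z : R) : - vec3 x y z = vec3 (- x) (- y) (- z).
Proof. by apply/rowP => -[[|[|[|//]]] i3]; rewrite !mxE. Qed.

Lemma vec3B (x y z x' y' z' : R) :
  vec3 x y z - vec3 x' y' z' = vec3 (x - x') (y - y') (z - z').
Proof. by apply/rowP => -[[|[|[|//]]] i3]; rewrite !mxE. Qed.

Lemma vec3Z (a x y z : R) : a *: vec3 x y z = vec3 (a * x) (a * y) (a * z).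
Proof. by apply/rowP => -[[|[|[|//]]] i3]; rewrite !mxE. Qed.

Lemma vec3_mulmx (x y z : R) r1 r2 r3 :
  vec3 x y z *m mx3 r1 r2 r3 = x *: r1 + y *: r2 + z *: r3.
Proof. by apply/rowP => j; rewrite !mxE !big_ord_recl big_ord0 !mxE /= addr0 addrA. Qed.

Lemma mulmx_subr_scalar n (u : 'rV[R]_n) (M : 'M[R]_n) (k : R) :
  u *m (M - k%:M) = u *m M - k *: u.
Proof. by rewrite mulmxBr mul_mx_scalar. Qed.

End Vec3.

Section G1.
Variables (R : realType) (alpha beta : R).

Lemma e_vec3 (i : 'I_3) :
  e R i = vec3 (i == 0 :> nat)%:R (i == 1 :> nat)%:R (i == 2 :> nat)%:R.
Proof.
by apply/rowP => j; rewrite !mxE; case: i j => [[|[|[|//]]] ?] [[|[|[|//]]] ?].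
Qed.

Lemma E1_vec3 : E1 R = vec3 1 0 0. Proof. by rewrite /E1 e_vec3 inordK. Qed.
Lemma E2_vec3 : E2 R = vec3 0 1 0. Proof. by rewrite /E2 e_vec3 inordK. Qed.
Lemma E3_vec3 : E3 R = vec3 0 0 1. Proof. by rewrite /E3 e_vec3 inordK. Qed.

Lemma g_vec3 (x1 y1 z1 x2 y2 z2 : R) :
  g (vec3 x1 y1 z1) (vec3 x2 y2 z2) = x1 * x2 + y1 * y2 - z1 * z2.
Proof. by rewrite /g !big_ord_recl big_ord0 !mxE /epsg /=; ring. Qed.

Lemma pseudo_orthonormal_expansion (u : vec R) :
  \sum_(k < 3) (epsg R k * g u (e R k)) *: e R k = u.
Proof.
rewrite (vec3_eta u) !big_ord_recl big_ord0 !e_vec3 /epsg /= !g_vec3.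
by rewrite addr0 !vec3Z !vec3D; congr vec3; ring.
Qed.

Lemma Jm_vec3 (x y z : R) : Jm (vec3 x y z) = vec3 x y (- z).
Proof.
rewrite /Jm !big_ord_recl big_ord0 /Jb /= !e_vec3 /= !mxE /=.
by rewrite addr0 !vec3N !vec3Z !vec3D; congr vec3; ring.
Qed.

Lemma br_vec3 (x1 y1 z1 x2 y2 z2 : R) :
  let p := x1 * y2 - y1 * x2 in
  let q := x1 * z2 - z1 * x2 in
  let r := y1 * z2 - z1 * y2 in
  br alpha beta (vec3 x1 y1 z1) (vec3 x2 y2 z2) =
  vec3 (alpha * p - alpha * q + beta * r) (alpha * r - beta * q) (alpha * r - beta * p).
Proof.
rewrite /br !big_ord_recl !big_ord0 /brb /= !mxE /= E1_vec3 E2_vec3 E3_vec3.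
rewrite !scaler0 ?addr0 ?add0r ?(vec3Z, vec3B, vec3N, vec3D).
by congr vec3; ring.
Qed.

Lemma nab_vec3 (x1 y1 z1 x2 y2 z2 : R) :
  nab alpha beta (vec3 x1 y1 z1) (vec3 x2 y2 z2) =
  vec3 (beta / 2 * (y1 * z2 - z1 * y2) + alpha * x1 * (y2 - z2))
       (beta / 2 * (z1 * x2 - x1 * z2) + alpha * (y1 * z2 - x1 * x2 - z1 * z2))
       (beta / 2 * (y1 * x2 - x1 * y2) + alpha * (y1 * y2 - x1 * x2 - z1 * y2)).
Proof.
rewrite /nab !big_ord_recl !big_ord0 /= !e_vec3 /epsg /= !br_vec3 !g_vec3.
by rewrite addr0 !vec3Z !vec3D; congr vec3; field.
Qed.

Lemma nab1_vec3 (x1 y1 z1 x2 y2 z2 : R) :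
  nab1 alpha beta (vec3 x1 y1 z1) (vec3 x2 y2 z2) =
  vec3 (alpha * (x1 * y2 + z1 * x2) - beta * z1 * y2)
       (beta * z1 * x2 - alpha * (x1 * x2 + z1 * y2))
       (alpha * y1 * z2).
Proof.
rewrite /nab1 /nab0 /nablaJ !Jm_vec3 !nab_vec3 !Jm_vec3.
by rewrite !vec3B !vec3Z !vec3B; congr vec3; field.
Qed.

Lemma Ric_mulmx (nb : vec R -> vec R -> vec R) (M : 'M[R]_3) :
  (forall X Y, rhot alpha beta nb X Y = g (X *m M) Y) ->
  forall X, Ric alpha beta nb X = X *m M.
Proof.
move=> rhotE X; rewrite /Ric -[RHS]pseudo_orthonormal_expansion.
by under eq_bigr do rewrite rhotE.
Qed.

Lemma alg_schouten_solitonE (nb : vec R -> vec R -> vec R) (M : 'M[R]_3) lambda0 c :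
  (forall X, Ric alpha beta nb X = X *m M) ->
  alg_schouten_soliton alpha beta nb lambda0 c <->
  is_derivation alpha beta (M - (scal alpha beta nb * lambda0 + c)%:M).
Proof.
set k := _ * lambda0 + c => RicE; split=> [[D [derD RicD]]|derM].
- suff -> : M - k%:M = D by [].
  apply/row_matrixP => i; rewrite !rowE mulmx_subr_scalar -RicE RicD.
  by rewrite addrAC subrr add0r.
- exists (M - k%:M); split=> // X.
  by rewrite RicE mulmx_subr_scalar addrC subrK.
Qed.

Definition ric1_mx : 'M[R]_3 :=
  mx3 (vec3 (- (alpha ^+ 2 + beta ^+ 2)) (alpha * beta) (alpha * beta / 2))
      (vec3 (alpha * beta) (- (alpha ^+ 2 + beta ^+ 2)) (- alpha ^+ 2 / 2))
      (vec3 (- (alpha * beta) / 2) (alpha ^+ 2 / 2) 0).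

Lemma rhot_nab1 (X Y : vec R) :
  rhot alpha beta (nab1 alpha beta) X Y = g (X *m ric1_mx) Y.
Proof.
rewrite (vec3_eta X) (vec3_eta Y) /rhot /rho /Curv E1_vec3 E2_vec3 E3_vec3.
rewrite !br_vec3 !nab1_vec3 !vec3B !g_vec3 vec3_mulmx !vec3Z !vec3D g_vec3.
by field.
Qed.

Lemma Ric_nab1 (X : vec R) : Ric alpha beta (nab1 alpha beta) X = X *m ric1_mx.
Proof. exact: Ric_mulmx rhot_nab1 X. Qed.

Lemma scal_nab1 : scal alpha beta (nab1 alpha beta) = - 2 * (alpha ^+ 2 + beta ^+ 2).
Proof.
rewrite /scal !rhot_nab1 E1_vec3 E2_vec3 E3_vec3 !vec3_mulmx !vec3Z !vec3D !g_vec3.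
by field.
Qed.

Lemma derivation_ric1_shift_e1e2 k :
  is_derivation alpha beta (ric1_mx - k%:M) ->
  alpha ^+ 2 * beta = 0 /\ alpha * (k + alpha ^+ 2 / 2 + 2 * beta ^+ 2) = 0.
Proof.
move=> /(_ (vec3 1 0 0) (vec3 0 1 0)).
rewrite !mulmx_subr_scalar !br_vec3 !vec3_mulmx !vec3Z !vec3D !vec3B !br_vec3 !vec3D.
by move=> /vec3_inj [eq1 eq2 _]; split; lra.
Qed.

Lemma is_derivation_ric1_shift k : alpha != 0 ->
  is_derivation alpha beta (ric1_mx - k%:M) <-> beta = 0 /\ k = - alpha ^+ 2 / 2.
Proof.
move=> alpha_neq0; split=> [/derivation_ric1_shift_e1e2 [a2b_eq0 ak_eq0] | [beta0 ->] u v].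
- have beta0 : beta = 0.
    by move/eqP: a2b_eq0; rewrite mulf_eq0 expf_eq0 (negbTE alpha_neq0) => /eqP.
  move/eqP: ak_eq0; rewrite mulf_eq0 (negbTE alpha_neq0) beta0 => /eqP ?.
  by split=> //; lra.
- rewrite (vec3_eta u) (vec3_eta v) !mulmx_subr_scalar !br_vec3 !vec3_mulmx.
  rewrite !vec3Z !vec3D !vec3B !br_vec3 !vec3D beta0.
  by congr vec3; field.
Qed.

End G1.

Theorem theorem4p3 (R : realType) (alpha beta lambda0 c : R) (halpha : alpha != 0) :
  alg_schouten_soliton alpha beta (nab1 alpha beta) lambda0 c <->
  (beta = 0 /\ c = - (1/2) * alpha ^+ 2 + 2 * alpha ^+ 2 * lambda0).
Proof.
rewrite (alg_schouten_solitonE _ _ (Ric_nab1 alpha beta)).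
rewrite is_derivation_ric1_shift // scal_nab1.
by split=> -[beta0 c_eq]; split=> //; move: c_eq; rewrite beta0 => ?; lra.
Qed.
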